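(* For every $m\ge3$ there exists $r_0(m)$ such that for all $r\ge r_0(m)$ there is no $r$-perfect code in $(\mathbb Z^m,d_a)$.
   Context: $d_a(\mathbf x,\mathbf y)=\max\{\sum_{i:x_i>y_i}(x_i-y_i),\sum_{i:x_i<y_i}(y_i-x_i)\}$ on $\mathbb Z^m$. A code $\mathcal C\subseteq\mathbb Z^m$ is $r$-perfect if the balls $\{\mathbf y: d_a(\mathbf y,\mathbf x)\le r\}$, $\mathbf x\in\mathcal C$, are pairwise disjoint and their union is $\mathbb Z^m$. *)

From mathcomp Require Import all_boot all_order all_algebra.
Set Implicit Arguments. Unset Strict Implicit. Unset Printing Implicit Defensive.
Import Order.TTheory GRing.Theory Num.Theory.
Local Open Scope ring_scope.

Definition point (m : nat) := 'I_m -> int.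

Definition d_a (m : nat) (x y : point m) : int :=
  Num.max (\sum_(i < m | y i < x i) (x i - y i))
          (\sum_(i < m | x i < y i) (y i - x i)).

Definition ball (m : nat) (r : int) (x : point m) (y : point m) : Prop :=
  d_a y x <= r.

Definition perfect_code (m : nat) (r : int) (C : point m -> Prop) : Prop :=
  (forall c1 c2 : point m, C c1 -> C c2 -> c1 <> c2 ->
     forall y : point m, ~ (ball r c1 y /\ ball r c2 y)) /\
  (forall y : point m, exists c : point m, C c /\ ball r c y).

From mathcomp Require Import all_boot all_order all_algebra zify.
From Stdlib Require Import Classical_Prop ClassicalEpsilon.
Import Order.TTheory GRing.Theory Num.Theory.
Set Implicit Arguments. Unset Strict Implicit.

(* Let c be a codeword of an r-perfect code in Z^(k+3) with k <= r, and let n = r + 1.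
   For t = (a, b, e) in N^3 with a + b + e = n, the probe c + (a, b, e, -1, ..., -1) is at
   distance n from c, so it is covered by another codeword x.  Moving the probe by one unit
   step would put it in both balls unless x - c is negative on the last k coordinates and
   the positive parts u of x - c on the first three coordinates dominate t and add up to
   2n - 1; x then covers the probe of every t' <= u.  Hence the simplex {t : |t| = n} is
   partitioned into tiles {t : t <= u} with |u| = 2n - 1.  This is impossible for n >= 3:
   if some tile u has all u_i < n, the tile of each corner e_i abuts u along both edges
   through e_i and has thickness 0 along each of them, which forces u_i = n - 1 for all i;
   and if every tile contains a corner, the three corner tiles are parallelograms which
   either overlap or miss the point (1, 1, n - 2). *)

Definition triple := (nat * nat * nat)%type.

Definition tsum (t : triple) : nat := let: (a, b, c) := t in a + b + c.
Definition tmax (t : triple) : nat := let: (a, b, c) := t in maxn a (maxn b c).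
Definition tle (t u : triple) : Prop :=
  let: (a, b, c) := t in let: (a', b', c') := u in a <= a' /\ b <= b' /\ c <= c'.

(* [f t] is the tile containing the point [t] of the simplex [tsum t = n], a tile [u]
   being the set of points [s <= u] of the simplex. *)
Record is_tiling (n : nat) (f : triple -> triple) : Prop := IsTiling {
  tile_le : forall t, tsum t = n -> tle t (f t);
  tile_tsum : forall t, tsum t = n -> tsum (f t) = (2 * n).-1;
  tile_cover : forall s t, tsum s = n -> tsum t = n -> tle s (f t) -> f s = f t }.

Section Tiling.
Variables (n : nat) (f : triple -> triple).
Hypothesis ftile : is_tiling n f.

Lemma tile_sum y u1 u2 u3 : tsum y = n -> f y = (u1, u2, u3) -> u1 + u2 + u3 = (2 * n).-1.
Proof. by move=> hy ey; rewrite -(tile_tsum ftile hy) ey. Qed.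

Lemma tile_ge a b c u : a + b + c = n -> f (a, b, c) = u -> tle (a, b, c) u.
Proof. by move=> hy <-; apply: (tile_le ftile). Qed.

Lemma tile_eq s y u : tsum y = n -> f y = u -> tsum s = n -> tle s u -> f s = u.
Proof. by move=> hy <- hs hsu; apply: (tile_cover ftile). Qed.

Lemma tile_meet s y y' u u' : tsum y = n -> f y = u -> tsum y' = n -> f y' = u' ->
  tsum s = n -> tle s u -> tle s u' -> u = u'.
Proof. by move=> hy ey hy' ey' hs su su'; rewrite -(tile_eq hy ey hs su) (tile_eq hy' ey' hs su'). Qed.

Lemma noncorner_tile_edge y u1 u2 u3 b1 b2 b3 : tsum y = n -> f y = (u1, u2, u3) ->
  tmax (u1, u2, u3) < n -> f (0, n, 0) = (b1, b2, b3) -> b1 + u2 = n.-1 /\ b3 = 0.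
Proof.
move=> hy eu /= u_lt eb; have su := tile_sum hy eu.
(* [v] is the tile of the point just past the segment of [u] on the edge t3 = 0: it can
   neither meet [u] in row t3 = 1 nor reach back into [u], so it is the corner tile of
   (0, n, 0). *)
case ev: (f (n - u2.+1, u2.+1, 0)) => [[v1 v2] v3].
have hq : tsum (n - u2.+1, u2.+1, 0) = n by rewrite /=; lia.
have [lv1 [lv2 _]] := tile_ge hq ev.
have sv := tile_sum hq ev.
have v3_0 : v3 = 0.
  case: (posnP v3) => // v3_gt0.
  have : (u1, u2, u3) = (v1, v2, v3).
    by apply: (tile_meet (s := (n - u2.+1, u2, 1)) hy eu hq ev); rewrite /=; lia.
  case=> _ e _; lia.
have v1_lt : v1 < n - u2.
  rewrite ltnNge; apply/negP => v1_ge.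
  have : (u1, u2, u3) = (v1, v2, v3).
    by apply: (tile_meet (s := (n - u2, u2, 0)) hy eu hq ev); rewrite /=; lia.
  case=> _ e _; lia.
have : f (0, n, 0) = (v1, v2, v3) by apply: (tile_eq hq ev); rewrite /=; lia.
rewrite eb => -[-> _ ->]; lia.
Qed.

End Tiling.

Record coord_sym (s : triple -> triple) : Prop := CoordSym {
  sym_inv : involutive s;
  sym_tsum : forall t, tsum (s t) = tsum t;
  sym_tmax : forall t, tmax (s t) = tmax t;
  sym_tle : forall t u, tle (s t) (s u) <-> tle t u }.

Definition swap12 (t : triple) : triple := let: (a, b, c) := t in (b, a, c).
Definition swap13 (t : triple) : triple := let: (a, b, c) := t in (c, b, a).
Definition swap23 (t : triple) : triple := let: (a, b, c) := t in (a, c, b).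

Ltac solve_coord_sym :=
  split=> [[[? ?] ?] | [[? ?] ?] | [[? ?] ?] | [[? ?] ?] [[? ?] ?]] //=; lia.

Lemma swap12_sym : coord_sym swap12. Proof. solve_coord_sym. Qed.
Lemma swap13_sym : coord_sym swap13. Proof. solve_coord_sym. Qed.
Lemma swap23_sym : coord_sym swap23. Proof. solve_coord_sym. Qed.

Lemma tiling_sym n f s : coord_sym s -> is_tiling n f -> is_tiling n (s \o f \o s).
Proof.
case=> sK ssum _ sle [fle fsum fcover]; split=> /=.
- by move=> t ht; rewrite -{1}(sK t) sle; apply: fle; rewrite ssum.
- by move=> t ht; rewrite ssum fsum // ssum.
- move=> x t hx ht; rewrite -{1}(sK x) sle => hle.
  by rewrite (fcover (s x) (s t)) ?ssum.
Qed.

Lemma sym_conjE s f y u : coord_sym s -> f y = u -> (s \o f \o s) (s y) = s u.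
Proof. by case=> sK _ _ _ ey; rewrite /= sK ey. Qed.

Lemma noncorner_tile_mid n f y u1 u2 u3 : is_tiling n f -> tsum y = n ->
  f y = (u1, u2, u3) -> tmax (u1, u2, u3) < n -> u2 = n.-1.
Proof.
move=> ft hy eu u_lt; case eb: (f (0, n, 0)) => [[b1 b2] b3].
have [e1 _] := noncorner_tile_edge ft hy eu u_lt eb.
have [] := noncorner_tile_edge (tiling_sym swap13_sym ft) _ (sym_conjE swap13_sym eu) _
  (sym_conjE swap13_sym eb).
- by rewrite (sym_tsum swap13_sym).
- by move: u_lt => /=; lia.
- lia.
Qed.

Lemma tiling_corner n f y : 3 <= n -> is_tiling n f -> tsum y = n -> n <= tmax (f y).
Proof.
move=> n_ge3 ft hy; case eu: (f y) => [[u1 u2] u3].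
rewrite leqNgt; apply/negP => u_lt.
have su := tile_sum ft hy eu.
have u2E := noncorner_tile_mid ft hy eu u_lt.
have u1E : u1 = n.-1.
  apply: (noncorner_tile_mid (tiling_sym swap12_sym ft) _ (sym_conjE swap12_sym eu)).
  - by rewrite (sym_tsum swap12_sym).
  - by move: u_lt => /=; lia.
have u3E : u3 = n.-1.
  apply: (noncorner_tile_mid (tiling_sym swap23_sym ft) _ (sym_conjE swap23_sym eu)).
  - by rewrite (sym_tsum swap23_sym).
  - by move: u_lt => /=; lia.
lia.
Qed.

Lemma corner_tiles_edge n f a1 a2 a3 b1 b2 b3 : 3 <= n -> is_tiling n f ->
  f (n, 0, 0) = (a1, a2, a3) -> f (0, n, 0) = (b1, b2, b3) -> n.-1 <= a2 + b1.
Proof.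
move=> n_ge3 ft ea eb.
have hB : tsum (0, n, 0) = n by rewrite /= addn0.
have [_ [lb2 _]] := tile_ge ft hB eb.
have sb := tile_sum ft hB eb.
have hq : tsum (b1.+1, n - b1.+1, 0) = n by rewrite /=; lia.
case ev: (f (b1.+1, n - b1.+1, 0)) => [[v1 v2] v3].
have [lv1 [lv2 _]] := tile_ge ft hq ev.
have sv := tile_sum ft hq ev.
have := tiling_corner n_ge3 ft hq; rewrite ev /= => v_corner.
case: (leqP n v2) => v2_ge.
  have : f (0, n, 0) = (v1, v2, v3) by apply: (tile_eq ft hq ev); rewrite /=; lia.
  by rewrite eb => -[e _ _]; lia.
have : f (n, 0, 0) = (v1, v2, v3) by apply: (tile_eq ft hq ev); rewrite /=; lia.
by rewrite ea => -[_ -> _]; lia.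
Qed.

Theorem no_tiling n f : 3 <= n -> ~ is_tiling n f.
Proof.
move=> n_ge3 ft.
have hA : tsum (n, 0, 0) = n by rewrite /= !addn0.
have hB : tsum (0, n, 0) = n by rewrite /= addn0.
have hC : tsum (0, 0, n) = n by [].
case ea: (f (n, 0, 0)) => [[a1 a2] a3].
case eb: (f (0, n, 0)) => [[b1 b2] b3].
case ec: (f (0, 0, n)) => [[c1 c2] c3].
have [la1 _] := tile_ge ft hA ea; have sa := tile_sum ft hA ea.
have [_ [lb2 _]] := tile_ge ft hB eb; have sb := tile_sum ft hB eb.
have [_ [_ lc3]] := tile_ge ft hC ec; have sc := tile_sum ft hC ec.
have e12 := corner_tiles_edge n_ge3 ft ea eb.
have e32 := corner_tiles_edge n_ge3 (tiling_sym swap13_sym ft)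
  (sym_conjE swap13_sym ec) (sym_conjE swap13_sym eb).
have e13 := corner_tiles_edge n_ge3 (tiling_sym swap23_sym ft)
  (sym_conjE swap23_sym ea) (sym_conjE swap23_sym ec).
rewrite /= in e32 e13.
(* With the tile sums these force a2 + a3 = n - 1, b1 = c2 = a3 and b3 = c1 = a2. *)
have [/andP[a2_gt0 a2_lt]|a2_edge] : 0 < a2 < n.-1 \/ a2 = 0 \/ a2 = n.-1 by lia.
  have hs : tsum (n.-1 - a2, a2, 1) = n by rewrite /=; lia.
  have : (a1, a2, a3) = (b1, b2, b3).
    by apply: (tile_meet ft hA ea hB eb hs); rewrite /=; lia.
  by case=> e _ _; lia.
have hs : tsum (1, 1, n - 2) = n by rewrite /=; lia.
case ev: (f (1, 1, n - 2)) => [[v1 v2] v3].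
have [lv1 [lv2 lv3]] := tile_ge ft hs ev.
have := tiling_corner n_ge3 ft hs; rewrite ev /= => v_corner.
case: (leqP n v1) => [v1_ge|v1_lt].
  have : f (n, 0, 0) = (v1, v2, v3) by apply: (tile_eq ft hs ev); rewrite /=; lia.
  by rewrite ea; case; lia.
case: (leqP n v2) => [v2_ge|v2_lt].
  have : f (0, n, 0) = (v1, v2, v3) by apply: (tile_eq ft hs ev); rewrite /=; lia.
  by rewrite eb; case; lia.
have : f (0, 0, n) = (v1, v2, v3) by apply: (tile_eq ft hs ev); rewrite /=; lia.
by rewrite ec; case; lia.
Qed.

Local Open Scope ring_scope.

Notation pos z := (Num.max z 0).
Notation neg z := (Num.max (- z) 0).

Definition psum m (v : 'I_m -> int) : int := \sum_i pos (v i).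
Definition nsum m (v : 'I_m -> int) : int := \sum_i neg (v i).

Lemma ballE m (r : int) (x y : point m) :
  ball r x y <-> psum (fun i => y i - x i) <= r /\ nsum (fun i => y i - x i) <= r.
Proof.
rewrite /ball; suff -> : d_a y x = Num.max (psum (fun i => y i - x i)) (nsum (fun i => y i - x i)).
  by lia.
rewrite /d_a /psum /nsum; congr Num.max; rewrite big_mkcond; apply: eq_bigr => i _ /=;
  case: ifP; lia.
Qed.

Definition update m (v : 'I_m -> int) i w : 'I_m -> int :=
  fun l => if l == i then w else v l.

Lemma update_ne m (v : 'I_m -> int) i w l : l != i -> update v i w l = v l.
Proof. by rewrite /update => /negPf ->. Qed.

Lemma sum_update m (F : int -> int) (v x : 'I_m -> int) i w :
  \sum_l F (update v i w l - x l) = \sum_l F (v l - x l) - F (v i - x i) + F (w - x i).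
Proof.
rewrite (bigD1 i) //= [in RHS](bigD1 i) //= /update eqxx.
rewrite (eq_bigr (fun l => F (v l - x l))); last by move=> l /negPf ->.
lia.
Qed.

Lemma psum_update m (v x : 'I_m -> int) i w :
  psum (fun l => update v i w l - x l) =
  psum (fun l => v l - x l) - pos (v i - x i) + pos (w - x i).
Proof. exact: (sum_update (fun z => pos z)). Qed.

Lemma nsum_update m (v x : 'I_m -> int) i w :
  nsum (fun l => update v i w l - x l) =
  nsum (fun l => v l - x l) - neg (v i - x i) + neg (w - x i).
Proof. exact: (sum_update (fun z => neg z)). Qed.

Section Probes.
Variables (k : nat) (c : point k.+3).

Definition ix0 : 'I_k.+3 := @Ordinal k.+3 0 isT.
Definition ix1 : 'I_k.+3 := @Ordinal k.+3 1 isT.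
Definition ix2 : 'I_k.+3 := @Ordinal k.+3 2 isT.
Definition tail (j : 'I_k) : 'I_k.+3 := @Ordinal k.+3 j.+3 (ltn_ord j).

Lemma sum_head3 (F : 'I_k.+3 -> int) :
  \sum_i F i = F ix0 + F ix1 + F ix2 + \sum_(j < k) F (tail j).
Proof.
rewrite 3!big_ord_recl !addrA.
by congr (_ + _ + _ + _); [congr F; apply: val_inj..|apply: eq_bigr => j _; congr F; apply: val_inj].
Qed.

Definition shape (t : triple) (l : 'I_k.+3) : int :=
  let: (a, b, cc) := t in nth (-1) [:: a%:Z; b%:Z; cc%:Z] l.

Lemma shape_tail t j : shape t (tail j) = -1.
Proof. by case: t => [[? ?] ?]; rewrite /= nth_nil. Qed.

Definition probe (t : triple) : point k.+3 := fun l => shape t l + c l.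

Lemma psum_probe t : psum (fun l => probe t l - c l) = (tsum t)%:Z.
Proof.
case: t => [[a b] cc]; rewrite /psum sum_head3 big1 => [|j _]; rewrite /probe !addrK ?shape_tail /=; lia.
Qed.

Lemma nsum_probe t : nsum (fun l => probe t l - c l) = k%:Z.
Proof.
case: t => [[a b] cc]; rewrite /nsum sum_head3 /probe !addrK.
rewrite (eq_bigr (fun _ => 1)); last by move=> j _; rewrite addrK shape_tail.
rewrite sumr_const card_ord /=; lia.
Qed.

Definition profile (x : point k.+3) : triple :=
  (absz (pos (x ix0 - c ix0)), absz (pos (x ix1 - c ix1)), absz (pos (x ix2 - c ix2))).

Lemma probe_nsum_profile t x : (forall j, x (tail j) < c (tail j)) -> tle t (profile x) ->
  nsum (fun l => probe t l - x l) = (tsum (profile x))%:Z - (tsum t)%:Z.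
Proof.
case: t => [[a b] cc] x_tail; rewrite /= /nsum sum_head3 big1 => [|j _]; last first.
  by have := x_tail j; rewrite /probe shape_tail; lia.
rewrite /probe /=; lia.
Qed.

Lemma probe_psum_profile t t' x : tle t (profile x) -> tle t' (profile x) ->
  psum (fun l => probe t l - x l) = psum (fun l => probe t' l - x l).
Proof.
case: t t' => [[a b] cc] [[a' b'] cc']; rewrite /= /psum !sum_head3.
have -> : forall t, \sum_(j < k) pos (probe t (tail j) - x (tail j)) =
    \sum_(j < k) pos (c (tail j) - 1 - x (tail j)).
  by move=> t; apply: eq_bigr => j _; rewrite /probe shape_tail; lia.
rewrite /probe /=; lia.
Qed.

End Probes.

Section Covering.
Variables (k r : nat) (C : point k.+3 -> Prop) (c : point k.+3).
Hypothesis C_disjoint : forall c1 c2, C c1 -> C c2 -> c1 <> c2 ->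
  forall y, ~ (ball r%:Z c1 y /\ ball r%:Z c2 y).
Hypothesis Cc : C c.
Hypothesis k_le_r : (k <= r)%N.

Lemma codeword_eq x x' y : C x -> C x' -> ball r%:Z x y -> ball r%:Z x' y -> x = x'.
Proof. by move=> Cx Cx' bx bx'; apply: NNPP => ne; exact: (C_disjoint Cx Cx' ne (conj bx bx')). Qed.

Variables (t : triple) (x : point k.+3).
Hypotheses (Cx : C x) (t_sum : tsum t = r.+1) (x_cover : ball r%:Z x (probe c t)).
Local Notation Y := (probe c t).

Lemma shape_pos : exists s : 'I_k.+3, 0 < shape t s.
Proof.
move: t_sum; case: t => [[a b] cc] /= hs.
have [a_gt0|[b_gt0|cc_gt0]] : (0 < a \/ 0 < b \/ 0 < cc)%N by lia.
- by exists (ix0 k); rewrite /=; lia.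
- by exists (ix1 k); rewrite /=; lia.
- by exists (ix2 k); rewrite /=; lia.
Qed.

Lemma covering_neq : x <> c.
Proof. by move=> e; move: x_cover; rewrite e => /ballE; rewrite psum_probe t_sum; lia. Qed.

Lemma ball_probe_lower s : 0 < shape t s -> ball r%:Z c (update Y s (Y s - 1)).
Proof.
move=> hs; apply/ballE.
rewrite psum_update nsum_update psum_probe nsum_probe t_sum /probe; lia.
Qed.

Lemma probe_le_covering s : 0 < shape t s -> Y s <= x s.
Proof.
move=> hs; rewrite leNgt; apply/negP => lt; apply: covering_neq.
apply: (codeword_eq Cx Cc _ (ball_probe_lower hs)).
move/ballE: x_cover => x_ball; apply/ballE; rewrite psum_update nsum_update; lia.
Qed.

Lemma covering_nsum : nsum (fun l => Y l - x l) = r%:Z.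
Proof.
have [s hs] := shape_pos; have x_s := probe_le_covering hs.
move/ballE: (x_cover) => [x_psum x_nsum].
apply/eqP; rewrite eq_le x_nsum leNgt; apply/negP => lt; apply: covering_neq.
apply: (codeword_eq Cx Cc _ (ball_probe_lower hs)).
by apply/ballE; rewrite psum_update nsum_update; lia.
Qed.

Lemma covering_tail j : x (tail j) < c (tail j).
Proof.
rewrite ltNge; apply/negP => le; apply: covering_neq.
have [s hs] := shape_pos; have x_s := probe_le_covering hs.
have ne : tail j != s by apply: contraTneq hs => <-; rewrite shape_tail.
(* Moving one unit from [s] to [j] keeps the probe in the ball of x and brings it
   into the ball of c. *)
pose Y' := update (update Y s (Y s - 1)) (tail j) (Y (tail j) + 1).
apply: (codeword_eq Cx Cc (y := Y')).
  move/ballE: x_cover => x_ball; apply/ballE.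
  rewrite psum_update nsum_update (update_ne _ _ ne) psum_update nsum_update.
  by rewrite /probe shape_tail in x_s x_ball *; lia.
apply/ballE; rewrite psum_update nsum_update (update_ne _ _ ne) psum_update nsum_update.
by rewrite psum_probe nsum_probe t_sum /probe shape_tail; lia.
Qed.

Lemma covering_shape_le s : shape t s <= pos (x s - c s).
Proof.
have [hs|hs] := ltrP 0 (shape t s); last by lia.
by have := probe_le_covering hs; rewrite /probe; lia.
Qed.

Lemma covering_profile_ge : tle t (profile c x).
Proof.
move: (covering_shape_le (ix0 k)) (covering_shape_le (ix1 k)) (covering_shape_le (ix2 k)).
by case: t => [[a b] cc] /=; lia.
Qed.

Lemma covering_profile_sum : tsum (profile c x) = ((2 * r.+1).-1)%N.
Proof.
have := probe_nsum_profile covering_tail covering_profile_ge.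
by rewrite covering_nsum t_sum; lia.
Qed.

Lemma covering_ball t' : tsum t' = r.+1 -> tle t' (profile c x) -> ball r%:Z x (probe c t').
Proof.
move=> t'_sum t'_le; move/ballE: x_cover => [x_psum _]; apply/ballE.
rewrite (probe_psum_profile t'_le covering_profile_ge) probe_nsum_profile //.
  by rewrite covering_profile_sum t'_sum; lia.
exact: covering_tail.
Qed.

End Covering.

Lemma perfect_code_tiling k r (C : point k.+3 -> Prop) :
  (k <= r)%N -> perfect_code r%:Z C -> exists f, is_tiling r.+1 f.
Proof.
move=> k_le_r [C_disjoint C_cover]; have [c [Cc _]] := C_cover (fun _ => 0).
have [X HX] := choice (fun t x => C x /\ ball r%:Z x (probe c t)) (fun t => C_cover (probe c t)).
exists (fun t => profile c (X t)); split=> [t t_sum|t t_sum|s t s_sum t_sum le_st].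
- have [CX X_ball] := HX t; exact: (covering_profile_ge C_disjoint Cc k_le_r CX t_sum X_ball).
- have [CX X_ball] := HX t; exact: (covering_profile_sum C_disjoint Cc k_le_r CX t_sum X_ball).
have [CX X_ball] := HX t; congr profile.
apply: (codeword_eq C_disjoint (HX s).1 CX (HX s).2).
exact: (covering_ball C_disjoint Cc k_le_r CX t_sum X_ball s_sum le_st).
Qed.

Theorem mainTheorem11 :
  forall m : nat, (3 <= m)%N ->
  exists r0 : nat, forall r : nat, (r0 <= r)%N ->
    ~ exists C : point m -> Prop, perfect_code r%:Z C.
Proof.
move=> m m_ge3; exists m => r m_le_r [C C_perfect].
case: m m_ge3 m_le_r C C_perfect => [|[|[|k]]] // _ k_le_r C C_perfect.
have [f f_tiling] := perfect_code_tiling (ltnW (ltnW (ltnW k_le_r))) C_perfect.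
by apply: (no_tiling _ f_tiling); lia.
Qed.
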